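(* Let $n\ge3$ be odd. Then $h(n)=\frac{1}{2n}\cot\frac{\pi}{2n}$, and moreover $h(n)=\operatorname{Im}\lambda_{(n-1)/2}(n)$, where $\lambda_k(n)=\frac1n\big(k-\sum_{j=1}^k e^{-2\pi\mathrm i j/n}\big)$.
   Context: A standardized Laplacian matrix of order $n$ is a real $n\times n$ matrix whose row sums are all $0$ and whose off-diagonal entries are nonpositive with absolute value at most $1/n$. $h(n)$ is the supremum of $\operatorname{Im}\lambda$ over all eigenvalues $\lambda$ of all standardized Laplacian matrices of order $n$. *)

From Stdlib Require Import Reals Lra Lia.
Open Scope R_scope.

Fixpoint rsum (n : nat) (f : nat -> R) : R :=
  match n with
  | O => 0
  | S k => rsum k f + f k
  end.

(* A real n x n matrix is represented by M : nat -> nat -> R, only the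
   entries M i j with i, j < n being relevant. *)
Definition std_laplacian (n : nat) (M : nat -> nat -> R) : Prop :=
  (forall i, (i < n)%nat -> rsum n (fun j => M i j) = 0) /\
  (forall i j, (i < n)%nat -> (j < n)%nat -> i <> j ->
      M i j <= 0 /\ Rabs (M i j) <= 1 / INR n).

(* a + b i is an eigenvalue of the real matrix M: there is a nonzero complex
   vector v = x + i y with M v = (a + b i) v, written in real/imaginary parts. *)
Definition is_eigenvalue (n : nat) (M : nat -> nat -> R) (a b : R) : Prop :=
  exists x y : nat -> R,
    (exists i, (i < n)%nat /\ (x i <> 0 \/ y i <> 0)) /\
    forall i, (i < n)%nat ->
      rsum n (fun j => M i j * x j) = a * x i - b * y i /\
      rsum n (fun j => M i j * y j) = b * x i + a * y i.

Definition Im_spectra (n : nat) (t : R) : Prop :=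
  exists M a, std_laplacian n M /\ is_eigenvalue n M a t.

(* lambda_k(n) = (1/n) (k - sum_{j=1}^k exp(-2 pi i j / n)), real and imaginary parts. *)
Definition lambda_re (k n : nat) : R :=
  / INR n * (INR k - rsum k (fun j => cos (2 * PI * INR (S j) / INR n))).
Definition lambda_im (k n : nat) : R :=
  / INR n * rsum k (fun j => sin (2 * PI * INR (S j) / INR n)).

Definition cot (x : R) : R := cos x / sin x.

(* If M (x + i y) = (a + i b)(x + i y),
   then b * sum |v_i|^2 = sum_(i,j) M_ij det(v_i, v_j) with v_i = (x_i, y_i);
   pairing (i,j) with (j,i) and using -1/n <= M_ij <= 0 bounds this by
   (1/n) sum_(j<i) |det(v_j, v_i)|.  Replacing each v_i by +-v_i in the upper
   half-plane and sorting by angle turns these absolute values into signed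
   determinants without changing the norms.  By Abel summation the signed sum
   is sum_i y_i (z_i + z_(i+1)) for the centered partial sums z of x, which
   satisfy z_n = -z_0; Cauchy-Schwarz and a discrete Wirtinger inequality for
   such antiperiodic sequences (proved by a Picone argument with the positive
   comparison sequence sin((2i+1) pi/2n)) give the bound (1/2) cot(pi/2n) |v|^2.

   For n = 2k+1 the circulant matrix joining each vertex to its k
   cyclic successors with weight -1/n is a standardized Laplacian having the
   Fourier vector as eigenvector with eigenvalue lambda_k(n), and a telescoping
   sine sum gives Im lambda_k(n) = cot(pi/2n)/2n. *)

From Stdlib Require Import Reals Lra Lia List Permutation Sorted Mergesort Orders.
Open Scope R_scope.

Lemma rsum_ext n f g : (forall i, (i < n)%nat -> f i = g i) -> rsum n f = rsum n g.
Proof.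
  induction n as [|n IH]; intros H; simpl; [reflexivity|].
  rewrite IH by (intros; apply H; lia). rewrite H by lia. reflexivity.
Qed.

Lemma rsum_plus n f g : rsum n (fun i => f i + g i) = rsum n f + rsum n g.
Proof. induction n; simpl; lra. Qed.

Lemma rsum_minus n f g : rsum n (fun i => f i - g i) = rsum n f - rsum n g.
Proof. induction n; simpl; lra. Qed.

Lemma rsum_opp n f : rsum n (fun i => - f i) = - rsum n f.
Proof. induction n; simpl; lra. Qed.

Lemma rsum_scal n c f : rsum n (fun i => c * f i) = c * rsum n f.
Proof. induction n as [|n IH]; simpl; [lra|]. rewrite IH; lra. Qed.

Lemma rsum_const n c : rsum n (fun _ => c) = INR n * c.
Proof. induction n as [|n IH]; simpl rsum; [simpl; lra|]. rewrite IH, S_INR; lra. Qed.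

Lemma rsum_le n f g : (forall i, (i < n)%nat -> f i <= g i) -> rsum n f <= rsum n g.
Proof.
  induction n as [|n IH]; intros H; simpl; [lra|].
  assert (rsum n f <= rsum n g) by (apply IH; intros; apply H; lia).
  assert (f n <= g n) by (apply H; lia).
  lra.
Qed.

Lemma rsum_pos n f : (forall i, (i < n)%nat -> 0 <= f i) ->
  (exists i, (i < n)%nat /\ 0 < f i) -> 0 < rsum n f.
Proof.
  induction n as [|n IH]; intros H [i [Hi Hf]]; [lia|]. simpl.
  assert (0 <= rsum n f).
  { replace 0 with (rsum n (fun _ => 0)) by (rewrite rsum_const; ring).
    apply rsum_le; intros; apply H; lia. }
  assert (0 <= f n) by (apply H; lia).
  destruct (Nat.eq_dec i n) as [->|Hin]; [lra|].
  assert (0 < rsum n f) by (apply IH; [intros; apply H; lia | exists i; split; [lia | auto]]).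
  lra.
Qed.

Lemma rsum_shift n f : rsum (S n) f = f 0%nat + rsum n (fun i => f (S i)).
Proof. induction n as [|n IH]; simpl in *; [lra|]. rewrite IH; lra. Qed.

Lemma rsum_tele n g : rsum n (fun i => g (S i) - g i) = g n - g 0%nat.
Proof. induction n as [|n IH]; simpl; [lra|]. rewrite IH; lra. Qed.

Lemma rsum_periodic_shift n (F : nat -> R) : (forall t, F (t + n)%nat = F t) ->
  forall s, rsum n (fun j => F (j + s)%nat) = rsum n F.
Proof.
  intros Hper s. induction s as [|s IH].
  - apply rsum_ext. intros; f_equal; lia.
  - assert (Hsh := rsum_shift n (fun j => F (j + s)%nat)).
    simpl rsum in Hsh. rewrite (Nat.add_comm n s), Hper in Hsh.
    rewrite <- IH.
    transitivity (rsum n (fun j => F (S j + s)%nat)); [apply rsum_ext; intros; f_equal; lia|].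
    change (rsum n (fun j => F (S j + s)%nat)) with (rsum n (fun i => F (S (i + s)))).
    simpl (0 + s)%nat in Hsh. lra.
Qed.

Lemma rsum_pair n f :
  rsum n (fun i => rsum n (fun j => f i j)) =
  rsum n (fun i => f i i + rsum i (fun j => f i j + f j i)).
Proof.
  induction n as [|n IH]; simpl; [lra|].
  rewrite rsum_plus, IH, rsum_plus, (rsum_plus n (fun j => f n j) (fun j => f j n)). lra.
Qed.

(* Abel summation: exchange of the order in [sum_{j < i < m} x_i y_j]. *)
Lemma rsum_abel (x y : nat -> R) m :
  rsum m (fun i => x i * rsum i y) = rsum m (fun i => y i * (rsum m x - rsum (S i) x)).
Proof.
  induction m as [|m IH]; [simpl; lra|].
  simpl rsum at 1. rewrite IH.
  change (rsum (S m) (fun i => y i * (rsum (S m) x - rsum (S i) x)))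
    with (rsum m (fun i => y i * (rsum (S m) x - rsum (S i) x))
          + y m * (rsum (S m) x - rsum (S m) x)).
  simpl (rsum (S m) x).
  transitivity (rsum m (fun i => y i * (rsum m x - rsum (S i) x) + x m * y i)).
  - rewrite rsum_plus, rsum_scal. lra.
  - rewrite Rminus_diag, Rmult_0_r, Rplus_0_r. apply rsum_ext. intros; simpl; ring.
Qed.

(** A discrete Wirtinger inequality for antiperiodic sequences. *)

(* Pointwise Picone-type inequality: completing a square in [z1 / f1 - z2 / f2]. *)
Lemma picone_pt (f1 f2 z1 z2 t : R) : 0 < f1 -> 0 < f2 ->
  2 * t * (z1 / f1 - z2 / f2) - t ^ 2 / (f1 * f2) <=
  z1 ^ 2 / f1 * f2 + z2 ^ 2 / f2 * f1 - 2 * (z1 * z2).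
Proof.
  intros H1 H2.
  set (d := z1 / f1 - z2 / f2).
  assert (E : z1 ^ 2 / f1 * f2 + z2 ^ 2 / f2 * f1 - 2 * (z1 * z2) - (2 * t * d - t ^ 2 / (f1 * f2))
              = (f1 * f2 * d - t) ^ 2 / (f1 * f2)) by (unfold d; field; split; lra).
  assert (0 <= (f1 * f2 * d - t) ^ 2 / (f1 * f2)).
  { apply Rmult_le_pos; [apply pow2_ge_0|].
    left; apply Rinv_0_lt_compat, Rmult_lt_0_compat; lra. }
  lra.
Qed.

Lemma rsum_by_parts (u p q : nat -> R) M : (forall i, q (S i) = p i) ->
  rsum M (fun i => u i * p (S i) + u (S i) * p i) + u 0%nat * q 0%nat + u M * p (S M)
  = rsum (S M) (fun i => u i * (p (S i) + q i)).
Proof.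
  intros Hq. induction M as [|M IH]; [simpl; lra|].
  change (rsum (S (S M)) (fun i => u i * (p (S i) + q i))) with
    (rsum (S M) (fun i => u i * (p (S i) + q i)) + u (S M) * (p (S (S M)) + q (S M))).
  rewrite <- IH, Hq. simpl. lra.
Qed.

Section Wirtinger.

Variable M : nat.
Hypothesis HM : (1 <= M)%nat.
Let m := S M.
Let h := PI / (2 * INR m).
Let phi (i : nat) := sin ((2 * INR i + 1) * h).
Let qphi (i : nat) := sin ((2 * INR i - 1) * h).

Lemma m_times_h : INR m * h = PI / 2.
Proof.
  assert (2 <= INR m) by (unfold m; rewrite S_INR; apply (le_INR 1) in HM; simpl in HM; lra).
  unfold h. field. lra.
Qed.

Lemma h_bounds : 0 < h <= PI / 4.
Proof.
  assert (Hm : 2 <= INR m) by (unfold m; rewrite S_INR; apply (le_INR 1) in HM; simpl in HM; lra).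
  assert (HP := PI_RGT_0). unfold h. split.
  - apply Rdiv_lt_0_compat; lra.
  - apply Rmult_le_compat_l; [lra|]. apply Rinv_le_contravar; lra.
Qed.

Lemma sin_h_pos : 0 < sin h.
Proof. destruct h_bounds. apply sin_gt_0; assert (HP := PI_RGT_0); lra. Qed.

Lemma cos_h_pos : 0 < cos h.
Proof. destruct h_bounds. apply cos_gt_0; assert (HP := PI_RGT_0); lra. Qed.

Lemma phi_pos i : (i < m)%nat -> 0 < phi i.
Proof.
  intros Hi. destruct h_bounds as [Hh _]. assert (Hmh := m_times_h). unfold phi. apply sin_gt_0.
  - assert (0 <= INR i) by apply pos_INR. nra.
  - assert (Hi' : INR (S i) <= INR m) by (apply le_INR; lia). rewrite S_INR in Hi'.
    assert ((2 * INR i + 1) * h <= (2 * INR m - 1) * h) by (apply Rmult_le_compat_r; lra).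
    nra.
Qed.

Lemma phi_rec i : phi (S i) + qphi i = 2 * cos (2 * h) * phi i.
Proof.
  unfold phi, qphi. rewrite S_INR.
  replace ((2 * (INR i + 1) + 1) * h) with ((2 * INR i + 1) * h + 2 * h) by ring.
  replace ((2 * INR i - 1) * h) with ((2 * INR i + 1) * h - 2 * h) by ring.
  rewrite sin_plus, sin_minus. ring.
Qed.

Lemma qphi_S i : qphi (S i) = phi i.
Proof. unfold phi, qphi. rewrite S_INR. f_equal. ring. Qed.

(* Boundary values of [phi] and its shift, giving the end terms of the summation by parts. *)
Lemma phi_0 : phi 0 = sin h.
Proof. unfold phi. simpl. f_equal. ring. Qed.

Lemma qphi_0 : qphi 0 = - sin h.
Proof. unfold qphi. simpl. replace ((2 * 0 - 1) * h) with (- h) by ring. apply sin_neg. Qed.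

Lemma last_angle : (2 * INR M + 1) * h = PI - h.
Proof. assert (H := m_times_h). unfold m in H. rewrite S_INR in H. nra. Qed.

Lemma phi_M : phi M = sin h.
Proof. unfold phi. rewrite last_angle. apply sin_PI_x. Qed.

Lemma phi_SM : phi (S M) = - sin h.
Proof.
  unfold phi. rewrite S_INR.
  replace ((2 * (INR M + 1) + 1) * h) with (h + PI) by (assert (H := last_angle); lra).
  apply neg_sin.
Qed.

(* Telescoping: [1 / (phi i phi (i+1)) = kappa (i+1) - kappa i] with
   [kappa i = - cot ((2i+1) h) / sin (2h)], so the sum is [1 / sin^2 h]. *)
Lemma inv_phi_sum : rsum M (fun i => / (phi i * phi (S i))) = / (sin h ^ 2).
Proof.
  set (kappa := fun i : nat => - (cos ((2 * INR i + 1) * h) / phi i) / sin (2 * h)).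
  assert (Hsh := sin_h_pos). assert (Hch := cos_h_pos).
  assert (Hs2 : 0 < sin (2 * h)) by (rewrite sin_2a; nra).
  transitivity (rsum M (fun i => kappa (S i) - kappa i)).
  - apply rsum_ext. intros i Hi.
    assert (P1 := phi_pos i ltac:(unfold m; lia)).
    assert (P2 := phi_pos (S i) ltac:(unfold m; lia)).
    unfold kappa. unfold phi in *. rewrite S_INR in *.
    set (s := (2 * INR i + 1) * h) in *.
    replace ((2 * (INR i + 1) + 1) * h) with (s + 2 * h) in * by (unfold s; ring).
    assert (E : sin (2 * h) = sin (s + 2 * h) * cos s - cos (s + 2 * h) * sin s).
    { replace (2 * h) with ((s + 2 * h) - s) at 1 by ring. apply sin_minus. }
    field_simplify; try lra. rewrite E. field. lra.
  - rewrite rsum_tele. unfold kappa. fold (phi M). rewrite phi_M, last_angle.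
    rewrite cos_minus, cos_PI, sin_PI.
    unfold phi. simpl (INR 0). replace ((2 * 0 + 1) * h) with h by ring.
    rewrite sin_2a. field. lra.
Qed.

(* Summing the Picone inequality with [u i = z_i^2 / phi i], the recurrence
   of [phi] evaluates the left side; the free parameter [t] is chosen so that
   the correction terms add up to [(z_0 - z_M)^2]. *)
Lemma wirtinger_core (z : nat -> R) : z m = - z 0%nat ->
  rsum m (fun i => z i * z (S i)) <= cos (2 * h) * rsum m (fun i => z i ^ 2).
Proof.
  intros Hz. assert (Hsh := sin_h_pos).
  set (u := fun i => z i ^ 2 / phi i).
  assert (Parts := rsum_by_parts u phi qphi M qphi_S).
  assert (E1 : rsum (S M) (fun i => u i * (phi (S i) + qphi i))
               = 2 * cos (2 * h) * rsum m (fun i => z i ^ 2)).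
  { rewrite <- rsum_scal. apply rsum_ext. intros i Hi. rewrite phi_rec. unfold u.
    assert (P := phi_pos i Hi). field. lra. }
  assert (E2 : u 0%nat * qphi 0%nat = - z 0%nat ^ 2).
  { unfold u. rewrite qphi_0, phi_0. field. lra. }
  assert (E3 : u M * phi (S M) = - z M ^ 2).
  { unfold u. rewrite phi_SM, phi_M. field. lra. }
  set (D := rsum M (fun i => z i / phi i - z (S i) / phi (S i))).
  assert (ED : D = (z 0%nat - z M) / sin h).
  { unfold D. set (g := fun i => - (z i / phi i)).
    transitivity (rsum M (fun i => g (S i) - g i)); [apply rsum_ext; intros; unfold g; ring|].
    rewrite rsum_tele. unfold g. rewrite phi_M, phi_0. field. lra. }
  set (t := sin h ^ 2 * D).
  assert (Pic : rsum M (fun i => 2 * t * (z i / phi i - z (S i) / phi (S i))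
                                 - t ^ 2 * / (phi i * phi (S i)))
                <= rsum M (fun i => u i * phi (S i) + u (S i) * phi i - 2 * (z i * z (S i)))).
  { apply rsum_le. intros i Hi. unfold u.
    apply picone_pt; apply phi_pos; unfold m; lia. }
  rewrite !rsum_minus, !rsum_scal in Pic. fold D in Pic. rewrite inv_phi_sum in Pic.
  change (rsum m (fun i => z i * z (S i)))
    with (rsum M (fun i => z i * z (S i)) + z M * z m).
  rewrite Hz.
  assert (t ^ 2 * / sin h ^ 2 = t * D) by (unfold t; field; lra).
  assert (t * D = (z 0%nat - z M) ^ 2) by (unfold t; rewrite ED; field; lra).
  lra.
Qed.

Lemma discrete_wirtinger (z : nat -> R) : z m = - z 0%nat ->
  rsum m (fun i => (z i + z (S i)) ^ 2) <= cot h ^ 2 * rsum m (fun i => (z (S i) - z i) ^ 2).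
Proof.
  intros Hz. assert (C := wirtinger_core z Hz).
  assert (Tele : rsum m (fun i => z (S i) ^ 2) = rsum m (fun i => z i ^ 2)).
  { assert (T := rsum_tele m (fun i => z i ^ 2)). rewrite rsum_minus, Hz in T. lra. }
  assert (E1 : rsum m (fun i => (z i + z (S i)) ^ 2) =
    rsum m (fun i => z i ^ 2) + rsum m (fun i => z (S i) ^ 2) + 2 * rsum m (fun i => z i * z (S i))).
  { rewrite <- rsum_scal, <- !rsum_plus. apply rsum_ext; intros; ring. }
  assert (E2 : rsum m (fun i => (z (S i) - z i) ^ 2) =
    rsum m (fun i => z i ^ 2) + rsum m (fun i => z (S i) ^ 2) - 2 * rsum m (fun i => z i * z (S i))).
  { rewrite <- rsum_scal, <- rsum_plus, <- rsum_minus. apply rsum_ext; intros; ring. }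
  rewrite Tele in E1, E2.
  set (A := rsum m (fun i => z i ^ 2)) in *.
  set (B := rsum m (fun i => z i * z (S i))) in *.
  replace (A + A) with (2 * A) in E1, E2 by ring.
  rewrite E1, E2. rewrite cos_2a in C.
  assert (S1 := sin_h_pos). assert (C1 := cos_h_pos).
  assert (Pyth := sin2_cos2 h). unfold Rsqr in Pyth.
  assert (B * (sin h * sin h + cos h * cos h) <= (cos h * cos h - sin h * sin h) * A)
    by (rewrite Pyth; lra).
  unfold cot.
  replace ((cos h / sin h) ^ 2 * (2 * A - 2 * B))
    with ((cos h * cos h) * (2 * A - 2 * B) / (sin h * sin h)) by (field; lra).
  apply Rmult_le_reg_r with (sin h * sin h); [nra|].
  unfold Rdiv. rewrite Rmult_assoc, Rinv_l by nra. nra.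
Qed.

End Wirtinger.

(** The signed area of a polygon-like chain of planar vectors. *)

Definition signed_area (m : nat) (x y : nat -> R) : R :=
  rsum m (fun i => rsum i (fun j => x j * y i - y j * x i)).

(* Centered partial sums of [x]: [z_(i+1) - z_i = x_i] and [z_m = - z_0]. *)
Definition centered_psum (m : nat) (x : nat -> R) (i : nat) : R :=
  rsum i x - rsum m x / 2.

Lemma signed_area_abel m x y :
  signed_area m x y =
  rsum m (fun i => y i * (centered_psum m x i + centered_psum m x (S i))).
Proof.
  unfold signed_area.
  transitivity (rsum m (fun i => y i * rsum i x - x i * rsum i y)).
  - apply rsum_ext. intros i _. rewrite rsum_minus, <- !rsum_scal.
    f_equal; apply rsum_ext; intros; ring.
  - rewrite rsum_minus, (rsum_abel x y), <- rsum_minus. apply rsum_ext. intros i _.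
    unfold centered_psum. simpl (rsum (S i) x). field.
Qed.

(* Sharp bound on the signed area: by Cauchy-Schwarz (with the weight [c = cot h])
   and the discrete Wirtinger inequality applied to the centered partial sums. *)
Lemma signed_area_bound (m : nat) (Hm : (2 <= m)%nat) (x y : nat -> R) :
  signed_area m x y <= 1 / 2 * cot (PI / (2 * INR m)) * rsum m (fun i => x i ^ 2 + y i ^ 2).
Proof.
  destruct m as [|M]; [lia|]. assert (HM : (1 <= M)%nat) by lia.
  set (h := PI / (2 * INR (S M))).
  set (c := cot h).
  assert (Hc : 0 < c).
  { unfold c, cot. apply Rdiv_lt_0_compat; [apply cos_h_pos | apply sin_h_pos]; exact HM. }
  set (z := centered_psum (S M) x).
  assert (Hz : z (S M) = - z 0%nat) by (unfold z, centered_psum; simpl (rsum 0 x); lra).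
  assert (Hdiff : forall i, z (S i) - z i = x i) by (intros; unfold z, centered_psum; simpl; ring).
  assert (W : rsum (S M) (fun i => (z i + z (S i)) ^ 2) <= c ^ 2 * rsum (S M) (fun i => x i ^ 2)).
  { replace (rsum (S M) (fun i => x i ^ 2)) with (rsum (S M) (fun i => (z (S i) - z i) ^ 2))
      by (apply rsum_ext; intros; rewrite Hdiff; reflexivity).
    apply discrete_wirtinger; assumption. }
  assert (AMGM : forall i, y i * (z i + z (S i)) <=
                   1 / 2 * c * y i ^ 2 + 1 / 2 * / c * (z i + z (S i)) ^ 2).
  { intros i.
    assert (0 <= (c * y i - (z i + z (S i))) ^ 2 / c)
      by (apply Rmult_le_pos; [apply pow2_ge_0 | left; apply Rinv_0_lt_compat; exact Hc]).
    assert (1 / 2 * c * y i ^ 2 + 1 / 2 * / c * (z i + z (S i)) ^ 2 - y i * (z i + z (S i))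
            = 1 / 2 * ((c * y i - (z i + z (S i))) ^ 2 / c)) by (field; lra).
    lra. }
  rewrite signed_area_abel. fold z.
  apply Rle_trans with (rsum (S M) (fun i => 1 / 2 * c * y i ^ 2
                                          + 1 / 2 * / c * (z i + z (S i)) ^ 2));
    [apply rsum_le; intros; apply AMGM|].
  rewrite !rsum_plus, !rsum_scal.
  assert (1 / 2 * / c * rsum (S M) (fun i => (z i + z (S i)) ^ 2)
          <= 1 / 2 * c * rsum (S M) (fun i => x i ^ 2)).
  { replace (1 / 2 * c * rsum (S M) (fun i => x i ^ 2))
      with (1 / 2 * / c * (c ^ 2 * rsum (S M) (fun i => x i ^ 2))) by (field; lra).
    apply Rmult_le_compat_l; [|exact W].
    left. apply Rmult_lt_0_compat; [lra | apply Rinv_0_lt_compat; exact Hc]. }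
  fold h c. lra.
Qed.

(** Removing absolute values: sorting vectors by angle. *)

Definition unsigned_area (m : nat) (x y : nat -> R) : R :=
  rsum m (fun i => rsum i (fun j => Rabs (x j * y i - y j * x i))).

Definition sq_norms (m : nat) (x y : nat -> R) : R :=
  rsum m (fun i => x i ^ 2 + y i ^ 2).

Definition det (p q : R * R) : R := fst p * snd q - snd p * fst q.

Lemma det_anti p q : det p q = - det q p.
Proof. unfold det; ring. Qed.

(* The same quantities for a finite list of vectors, in a form invariant under permutation. *)
Definition lsum (l : list R) : R := fold_right Rplus 0 l.

Fixpoint unsigned_area_l (l : list (R * R)) : R :=
  match l with
  | nil => 0
  | u :: l' => lsum (map (fun v => Rabs (det u v)) l') + unsigned_area_l l'
  end.

Fixpoint signed_area_l (l : list (R * R)) : R :=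
  match l with
  | nil => 0
  | u :: l' => lsum (map (fun v => det u v) l') + signed_area_l l'
  end.

Definition sq_norms_l (l : list (R * R)) : R := lsum (map (fun v => fst v ^ 2 + snd v ^ 2) l).

Lemma lsum_perm l1 l2 : Permutation l1 l2 -> lsum l1 = lsum l2.
Proof. induction 1; simpl; lra. Qed.

Lemma unsigned_area_l_perm l1 l2 : Permutation l1 l2 -> unsigned_area_l l1 = unsigned_area_l l2.
Proof.
  induction 1; simpl.
  - reflexivity.
  - rewrite IHPermutation. f_equal. apply lsum_perm, Permutation_map; assumption.
  - rewrite (det_anti x y), Rabs_Ropp. lra.
  - congruence.
Qed.

Lemma sq_norms_l_perm l1 l2 : Permutation l1 l2 -> sq_norms_l l1 = sq_norms_l l2.
Proof. intros H. apply lsum_perm, Permutation_map, H. Qed.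

Lemma lsum_map_nth {A} (f : A -> R) l d :
  lsum (map f l) = rsum (length l) (fun i => f (nth i l d)).
Proof.
  induction l as [|a l IH]; [reflexivity|]. change (length (a :: l)) with (S (length l)).
  rewrite rsum_shift. simpl. rewrite IH. reflexivity.
Qed.

Definition xs (l : list (R * R)) (i : nat) : R := fst (nth i l (0, 0)).
Definition ys (l : list (R * R)) (i : nat) : R := snd (nth i l (0, 0)).

Lemma signed_area_l_rsum l : signed_area_l l = signed_area (length l) (xs l) (ys l).
Proof.
  unfold signed_area, xs, ys.
  induction l as [|u l IH]; [reflexivity|]. change (length (u :: l)) with (S (length l)).
  rewrite rsum_shift. simpl signed_area_l. simpl (rsum 0 _). rewrite Rplus_0_l.
  rewrite IH, (lsum_map_nth _ l (0, 0)), <- rsum_plus.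
  apply rsum_ext. intros i _. rewrite rsum_shift. reflexivity.
Qed.

Lemma unsigned_area_l_rsum l : unsigned_area_l l = unsigned_area (length l) (xs l) (ys l).
Proof.
  unfold unsigned_area, xs, ys.
  induction l as [|u l IH]; [reflexivity|]. change (length (u :: l)) with (S (length l)).
  rewrite rsum_shift. simpl unsigned_area_l. simpl (rsum 0 _). rewrite Rplus_0_l.
  rewrite IH, (lsum_map_nth _ l (0, 0)), <- rsum_plus.
  apply rsum_ext. intros i _. rewrite rsum_shift. reflexivity.
Qed.

Lemma sq_norms_l_rsum l : sq_norms_l l = sq_norms (length l) (xs l) (ys l).
Proof. unfold sq_norms_l, sq_norms, xs, ys. exact (lsum_map_nth (fun v => fst v ^ 2 + snd v ^ 2) l (0, 0)). Qed.

Definition inH0 (p : R * R) : Prop := 0 < snd p \/ (snd p = 0 /\ 0 <= fst p).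
Definition inH (p : R * R) : Prop := 0 < snd p \/ (snd p = 0 /\ 0 < fst p).

Definition flip (p : R * R) : R * R :=
  if Rlt_dec (snd p) 0 then (- fst p, - snd p)
  else if Req_EM_T (snd p) 0 then
         (if Rlt_dec (fst p) 0 then (- fst p, - snd p) else p)
       else p.

Lemma flip_inH0 p : inH0 (flip p).
Proof.
  unfold flip, inH0. destruct p as [a b]; simpl.
  destruct (Rlt_dec b 0); simpl; [lra|].
  destruct (Req_EM_T b 0); simpl; [destruct (Rlt_dec a 0); simpl|]; lra.
Qed.

Lemma flip_id p : inH0 p -> flip p = p.
Proof.
  unfold flip, inH0. destruct p as [a b]; simpl. intros H.
  destruct (Rlt_dec b 0); [lra|].
  destruct (Req_EM_T b 0); [destruct (Rlt_dec a 0); [lra|]|]; reflexivity.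
Qed.

Lemma flip_sign p : flip p = p \/ flip p = (- fst p, - snd p).
Proof.
  unfold flip. destruct (Rlt_dec (snd p) 0); [auto|].
  destruct (Req_EM_T (snd p) 0); [destruct (Rlt_dec (fst p) 0)|]; auto.
Qed.

Lemma flip_sq p : fst (flip p) ^ 2 + snd (flip p) ^ 2 = fst p ^ 2 + snd p ^ 2.
Proof. destruct (flip_sign p) as [-> | ->]; simpl; ring. Qed.

Lemma flip_det p q : Rabs (det (flip p) (flip q)) = Rabs (det p q).
Proof.
  destruct (flip_sign p) as [-> | ->], (flip_sign q) as [-> | ->]; unfold det; simpl;
    first [f_equal; ring | rewrite <- Rabs_Ropp; f_equal; ring].
Qed.

Lemma unsigned_area_l_flip l : unsigned_area_l (map flip l) = unsigned_area_l l.
Proof.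
  induction l as [|a l IH]; simpl; [reflexivity|]. rewrite IH, map_map.
  do 2 f_equal. apply map_ext. intros; apply flip_det.
Qed.

Lemma sq_norms_l_flip l : sq_norms_l (map flip l) = sq_norms_l l.
Proof. unfold sq_norms_l. rewrite map_map. f_equal. apply map_ext. intros; apply flip_sq. Qed.

(* The origin is replaced by [(1, 0)] so that comparison is transitive. *)
Definition nonzero_rep (p : R * R) : R * R :=
  if Req_EM_T (fst p) 0 then (if Req_EM_T (snd p) 0 then (1, 0) else p) else p.

Lemma nonzero_rep_inH p : inH0 p -> inH (nonzero_rep p).
Proof.
  unfold nonzero_rep, inH0, inH. destruct p as [a b]; simpl. intros H.
  destruct (Req_EM_T a 0); simpl; [destruct (Req_EM_T b 0); simpl|]; lra.
Qed.

Lemma det_trans p q r : inH p -> inH q -> inH r ->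
  0 <= det p q -> 0 <= det q r -> 0 <= det p r.
Proof.
  destruct p as [a b], q as [c d], r as [e f]. unfold inH, det; simpl.
  intros Hp Hq Hr H1 H2.
  destruct Hq as [Hd | [-> Hc]].
  - destruct Hp as [Hb | [-> Ha]]; [|nra].
    destruct Hr as [Hf | [-> He]]; [|nra].
    assert (0 <= (a * d - b * c) * f) by (apply Rmult_le_pos; lra).
    assert (0 <= (c * f - d * e) * b) by (apply Rmult_le_pos; lra).
    apply Rmult_le_reg_l with d; [lra|]. nra.
  - assert (b <= 0) by nra. destruct Hp as [Hb | [-> Ha]]; [lra|]. nra.
Qed.

Definition angle_key (p : R * R) : R * R := nonzero_rep (flip p).

Module AngleOrder <: TotalLeBool'.
  Definition t := (R * R)%type.
  Definition leb (p q : t) : bool :=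
    if Rle_dec 0 (det (angle_key p) (angle_key q)) then true else false.
  Theorem leb_total : forall p q, leb p q = true \/ leb q p = true.
  Proof.
    intros p q. unfold leb. rewrite (det_anti (angle_key q)).
    destruct (Rle_dec 0 (det (angle_key p) (angle_key q))); [auto|].
    destruct (Rle_dec 0 (- det (angle_key p) (angle_key q))); [auto | lra].
  Qed.
End AngleOrder.

Module AngleSort := Sort AngleOrder.

Lemma angle_leb_trans : Transitive (fun p q => AngleOrder.leb p q = true).
Proof.
  intros p q r. unfold AngleOrder.leb.
  destruct (Rle_dec 0 (det (angle_key p) (angle_key q))); [|discriminate].
  destruct (Rle_dec 0 (det (angle_key q) (angle_key r))); [|discriminate].
  intros _ _. destruct (Rle_dec 0 (det (angle_key p) (angle_key r))) as [|Hn]; [reflexivity|].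
  exfalso. apply Hn. unfold angle_key in *.
  apply det_trans with (nonzero_rep (flip q)); auto; apply nonzero_rep_inH, flip_inH0.
Qed.

Lemma angle_leb_det p q : inH0 p -> inH0 q -> AngleOrder.leb p q = true -> 0 <= det p q.
Proof.
  intros Hp Hq. unfold AngleOrder.leb, angle_key. rewrite !flip_id by assumption.
  destruct (Rle_dec 0 (det (nonzero_rep p) (nonzero_rep q))) as [Hd|]; [|discriminate].
  intros _. unfold nonzero_rep in Hd. destruct p as [a b], q as [c d]. simpl in Hd.
  destruct (Req_EM_T a 0); [destruct (Req_EM_T b 0)|];
    [subst; unfold det; simpl; lra| |];
    (destruct (Req_EM_T c 0); [destruct (Req_EM_T d 0)|]);
    try (subst; unfold det; simpl; lra); assumption.
Qed.

Lemma unsigned_area_l_sorted l :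
  StronglySorted (fun p q => AngleOrder.leb p q = true) l -> Forall inH0 l ->
  unsigned_area_l l = signed_area_l l.
Proof.
  induction 1 as [|a l Hs IH Hf]; simpl; [reflexivity|]. intros HF. inversion HF; subst.
  rewrite IH by assumption. do 2 f_equal. apply map_ext_in. intros v Hv.
  rewrite Rabs_right; [reflexivity|]. apply Rle_ge, angle_leb_det; [assumption| |].
  - rewrite Forall_forall in *; auto.
  - rewrite Forall_forall in Hf; auto.
Qed.

(* Main point: flipping each vector into the upper half-plane and sorting by
   angle turns the unsigned area into a signed area, preserving the norms. *)
Lemma unsigned_area_as_signed (m : nat) (x y : nat -> R) : exists x' y',
  unsigned_area m x y = signed_area m x' y' /\ sq_norms m x' y' = sq_norms m x y.
Proof.
  set (l := map (fun k => (x k, y k)) (seq 0 m)).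
  assert (Hlen : length l = m) by (unfold l; rewrite length_map, length_seq; reflexivity).
  assert (Hx : forall i, (i < m)%nat -> xs l i = x i /\ ys l i = y i).
  { intros i Hi. unfold xs, ys, l.
    rewrite nth_indep with (d' := (x 0%nat, y 0%nat)) by (rewrite length_map, length_seq; lia).
    rewrite (map_nth (fun k => (x k, y k)) (seq 0 m) 0%nat i), seq_nth by lia. simpl. auto. }
  set (l' := AngleSort.sort (map flip l)).
  assert (Hp : Permutation (map flip l) l') by apply AngleSort.Permuted_sort.
  assert (Hlen' : length l' = m) by (rewrite <- (Permutation_length Hp), length_map; exact Hlen).
  exists (xs l'), (ys l'). rewrite <- Hlen'. split.
  - rewrite <- signed_area_l_rsum, <- unsigned_area_l_sorted.
    + rewrite <- (unsigned_area_l_perm _ _ Hp), unsigned_area_l_flip, unsigned_area_l_rsum.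
      rewrite Hlen, Hlen'. unfold unsigned_area.
      apply rsum_ext. intros i Hi. apply rsum_ext. intros j Hj.
      destruct (Hx i Hi) as [-> ->]. destruct (Hx j ltac:(lia)) as [-> ->]. reflexivity.
    + apply AngleSort.StronglySorted_sort, angle_leb_trans.
    + apply Forall_forall. intros v Hv.
      apply (Permutation_in _ (Permutation_sym Hp)), in_map_iff in Hv.
      destruct Hv as [u [<- _]]. apply flip_inH0.
  - rewrite <- sq_norms_l_rsum, <- (sq_norms_l_perm _ _ Hp), sq_norms_l_flip, sq_norms_l_rsum.
    rewrite Hlen, Hlen'. unfold sq_norms. apply rsum_ext. intros i Hi.
    destruct (Hx i Hi) as [-> ->]. reflexivity.
Qed.

(** The upper bound [h(n) <= cot (pi / 2n) / 2n]. *)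

(* The only property of standardized Laplacians used for the upper bound:
   off-diagonal entries lie in [[-1/n, 0]]. *)
Definition offdiag_bounded (n : nat) (M : nat -> nat -> R) : Prop :=
  forall i j, (i < n)%nat -> (j < n)%nat -> i <> j ->
    M i j <= 0 /\ Rabs (M i j) <= 1 / INR n.

(* If [M (x + i y) = (a + i b) (x + i y)] then [b |v|^2 = sum_(i,j) M_ij det (v_i, v_j)];
   pairing [(i, j)] with [(j, i)] bounds each pair by [|det (v_j, v_i)| / n]. *)
Lemma im_eigenvalue_area n M a b x y : offdiag_bounded n M ->
  (forall i, (i < n)%nat ->
     rsum n (fun j => M i j * x j) = a * x i - b * y i /\
     rsum n (fun j => M i j * y j) = b * x i + a * y i) ->
  b * sq_norms n x y <= / INR n * unsigned_area n x y.
Proof.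
  intros Hoff Heq.
  set (D := fun i j => x i * y j - y i * x j).
  assert (Hexp : b * sq_norms n x y = rsum n (fun i => rsum n (fun j => M i j * D i j))).
  { unfold sq_norms. rewrite <- rsum_scal. apply rsum_ext. intros i Hi.
    destruct (Heq i Hi) as [Ex Ey].
    transitivity (x i * rsum n (fun j => M i j * y j) - y i * rsum n (fun j => M i j * x j));
      [rewrite Ex, Ey; ring|].
    rewrite <- !rsum_scal, <- rsum_minus. apply rsum_ext. intros; unfold D; ring. }
  rewrite Hexp, rsum_pair. unfold unsigned_area. rewrite <- rsum_scal.
  apply rsum_le. intros i Hi.
  replace (D i i) with 0 by (unfold D; ring). rewrite Rmult_0_r, Rplus_0_l, <- rsum_scal.
  apply rsum_le. intros j Hj.
  destruct (Hoff i j Hi ltac:(lia) ltac:(lia)) as [Mij_neg Mij_abs].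
  destruct (Hoff j i ltac:(lia) Hi ltac:(lia)) as [Mji_neg Mji_abs].
  rewrite Rabs_left1 in Mij_abs, Mji_abs by assumption.
  replace (D j i) with (- D i j) by (unfold D; ring).
  replace (x j * y i - y j * x i) with (- D i j) by (unfold D; ring). rewrite Rabs_Ropp.
  unfold Rdiv in Mij_abs, Mji_abs. rewrite Rmult_1_l in Mij_abs, Mji_abs.
  destruct (Rle_dec 0 (D i j)).
  - rewrite Rabs_right by lra. nra.
  - rewrite Rabs_left by lra. nra.
Qed.

Lemma im_eigenvalue_bound (n : nat) (Hn : (2 <= n)%nat) M a b :
  offdiag_bounded n M -> is_eigenvalue n M a b ->
  b <= 1 / (2 * INR n) * cot (PI / (2 * INR n)).
Proof.
  intros Hoff [x [y [[i0 [Hi0 Hnz]] Heq]]].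
  assert (HnR : 0 < INR n) by (apply lt_0_INR; lia).
  assert (HN : 0 < sq_norms n x y).
  { apply rsum_pos; [intros; nra|]. exists i0; split; [exact Hi0|]. destruct Hnz; nra. }
  assert (Area := im_eigenvalue_area n M a b x y Hoff Heq).
  destruct (unsigned_area_as_signed n x y) as [x' [y' [Eabs Enorm]]].
  assert (Bound := signed_area_bound n Hn x' y').
  fold (sq_norms n x' y') in Bound. rewrite Enorm, <- Eabs in Bound.
  apply Rmult_le_reg_r with (sq_norms n x y); [exact HN|].
  apply Rle_trans with (/ INR n * unsigned_area n x y); [exact Area|].
  apply Rle_trans with (/ INR n * (1 / 2 * cot (PI / (2 * INR n)) * sq_norms n x y)).
  - apply Rmult_le_compat_l; [left; apply Rinv_0_lt_compat|]; assumption.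
  - right. field. lra.
Qed.

(** The extremal circulant matrix for odd order [n = 2k + 1]. *)

Section Circulant.

Variable k : nat.
Let n := (2 * k + 1)%nat.

Lemma INR_n_pos : 0 < INR n.
Proof. apply lt_0_INR. unfold n; lia. Qed.

Definition offset_weight (d : nat) : R :=
  if Nat.eqb d 0 then INR k / INR n else if Nat.leb d k then - / INR n else 0.

(* The circulant matrix linking each vertex to its [k] cyclic successors. *)
Definition circ (i j : nat) : R := offset_weight ((j + n - i) mod n).

Lemma circ_row_offsets (F : nat -> R) i : (forall t, F (t + n)%nat = F t) -> (i < n)%nat ->
  rsum n (fun j => circ i j * F j) = rsum n (fun d => offset_weight d * F (d + i)%nat).
Proof.
  intros HF Hi.
  set (G := fun t => offset_weight (t mod n) * F (t + i)%nat).
  assert (HG : forall t, G (t + n)%nat = G t).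
  { intros t. unfold G. replace (t + n)%nat with (t + 1 * n)%nat by lia.
    rewrite Nat.Div0.mod_add. replace (t + 1 * n + i)%nat with (t + i + n)%nat by lia.
    rewrite HF. reflexivity. }
  transitivity (rsum n (fun j => G (j + (n - i))%nat)).
  - apply rsum_ext. intros j Hj. unfold G, circ. f_equal.
    + f_equal. f_equal. lia.
    + replace (j + (n - i) + i)%nat with (j + n)%nat by lia. symmetry; apply HF.
  - rewrite rsum_periodic_shift by exact HG.
    apply rsum_ext. intros d Hd. unfold G. rewrite Nat.mod_small by exact Hd. reflexivity.
Qed.

Lemma offset_weight_sum_small m (G : nat -> R) : (m <= k)%nat ->
  rsum (S m) (fun d => offset_weight d * G d)
  = INR k / INR n * G 0%nat - / INR n * rsum m (fun t => G (S t)).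
Proof.
  induction m as [|m IH]; intros Hm.
  - simpl. unfold offset_weight. simpl. ring.
  - change (rsum (S (S m)) (fun d => offset_weight d * G d))
      with (rsum (S m) (fun d => offset_weight d * G d) + offset_weight (S m) * G (S m)).
    rewrite IH by lia. simpl (rsum (S m) (fun t => G (S t))).
    unfold offset_weight at 1. replace (Nat.eqb (S m) 0) with false by reflexivity.
    replace (Nat.leb (S m) k) with true by (symmetry; apply Nat.leb_le; lia). ring.
Qed.

Lemma offset_weight_sum_big m (G : nat -> R) : (S k <= m)%nat ->
  rsum m (fun d => offset_weight d * G d) = rsum (S k) (fun d => offset_weight d * G d).
Proof.
  induction m as [|m IH]; intros Hm; [lia|].
  destruct (Nat.eq_dec m k) as [->|Hmk]; [reflexivity|].
  change (rsum (S m) (fun d => offset_weight d * G d))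
    with (rsum m (fun d => offset_weight d * G d) + offset_weight m * G m).
  rewrite IH by lia. unfold offset_weight at 2.
  replace (Nat.eqb m 0) with false by (symmetry; apply Nat.eqb_neq; lia).
  replace (Nat.leb m k) with false by (symmetry; apply Nat.leb_gt; lia). ring.
Qed.

Lemma circ_row (F : nat -> R) i : (forall t, F (t + n)%nat = F t) -> (i < n)%nat ->
  rsum n (fun j => circ i j * F j)
  = INR k / INR n * F i - / INR n * rsum k (fun t => F (S t + i)%nat).
Proof.
  intros HF Hi. rewrite circ_row_offsets by assumption.
  rewrite offset_weight_sum_big by (unfold n; lia).
  rewrite offset_weight_sum_small by lia. reflexivity.
Qed.

Lemma circ_laplacian : std_laplacian n circ.
Proof.
  assert (Hn := INR_n_pos). split.
  - intros i Hi. transitivity (rsum n (fun j => circ i j * 1)); [apply rsum_ext; intros; ring|].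
    rewrite (circ_row (fun _ => 1)) by auto. rewrite rsum_const. field. lra.
  - intros i j Hi Hj Hij. unfold circ.
    assert (Hd : ((j + n - i) mod n <> 0)%nat).
    { destruct (Nat.le_gt_cases i j).
      - replace (j + n - i)%nat with ((j - i) + 1 * n)%nat by lia.
        rewrite Nat.Div0.mod_add, Nat.mod_small by lia. lia.
      - rewrite Nat.mod_small by lia. lia. }
    assert (Hinv : 0 < / INR n) by (apply Rinv_0_lt_compat; exact Hn).
    unfold offset_weight.
    replace (Nat.eqb ((j + n - i) mod n) 0) with false by (symmetry; apply Nat.eqb_neq; exact Hd).
    unfold Rdiv. rewrite Rmult_1_l.
    destruct (Nat.leb _ k).
    + rewrite Rabs_Ropp, Rabs_right by lra. lra.
    + rewrite Rabs_R0. lra.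
Qed.

Definition angle (t : nat) : R := 2 * PI * INR t / INR n.

Lemma angle_period t : angle (t + n) = angle t + 2 * PI.
Proof. unfold angle. rewrite plus_INR. assert (H := INR_n_pos). field. lra. Qed.

Lemma angle_add t i : angle (S t + i) = angle i + angle (S t).
Proof. unfold angle. rewrite plus_INR. assert (H := INR_n_pos). field. lra. Qed.

(* The Fourier vector [e^(- 2 pi i j / n)] is an eigenvector with eigenvalue [lambda_k(n)]. *)
Lemma circ_eigenvalue : is_eigenvalue n circ (lambda_re k n) (lambda_im k n).
Proof.
  exists (fun j => cos (angle j)), (fun j => - sin (angle j)). split.
  - exists 0%nat. split; [unfold n; lia|]. left.
    replace (angle 0) with 0 by (unfold angle; simpl; field; apply Rgt_not_eq, INR_n_pos).
    rewrite cos_0. lra.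
  - intros i Hi. unfold lambda_re, lambda_im. fold n. assert (H := INR_n_pos).
    set (C := rsum k (fun t => cos (2 * PI * INR (S t) / INR n))).
    set (Sn := rsum k (fun t => sin (2 * PI * INR (S t) / INR n))).
    assert (EC : rsum k (fun t => cos (angle (S t + i))) = cos (angle i) * C - sin (angle i) * Sn).
    { unfold C, Sn. rewrite <- !rsum_scal, <- rsum_minus. apply rsum_ext. intros t _.
      rewrite angle_add, cos_plus. reflexivity. }
    assert (ES : rsum k (fun t => sin (angle (S t + i))) = sin (angle i) * C + cos (angle i) * Sn).
    { unfold C, Sn. rewrite <- !rsum_scal, <- rsum_plus. apply rsum_ext. intros t _.
      rewrite angle_add, sin_plus. unfold angle. ring. }
    assert (Pc : forall t, cos (angle (t + n)) = cos (angle t))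
      by (intros; rewrite angle_period, cos_plus, cos_2PI, sin_2PI; ring).
    assert (Ps : forall t, - sin (angle (t + n)) = - sin (angle t))
      by (intros; rewrite angle_period, sin_plus, cos_2PI, sin_2PI; ring).
    rewrite (circ_row _ i Pc Hi), (circ_row _ i Ps Hi), rsum_opp, EC, ES.
    split; field; lra.
Qed.

End Circulant.

(* Closed form of a sine sum by telescoping products [2 sin h sin (2 t h)]. *)
Lemma sin_sum k h :
  2 * sin h * rsum k (fun t => sin (2 * INR (S t) * h)) = cos h - cos ((2 * INR k + 1) * h).
Proof.
  induction k as [|k IH].
  - simpl. replace ((2 * 0 + 1) * h) with h by ring. ring.
  - change (rsum (S k) (fun t => sin (2 * INR (S t) * h)))
      with (rsum k (fun t => sin (2 * INR (S t) * h)) + sin (2 * INR (S k) * h)).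
    rewrite Rmult_plus_distr_l, IH.
    set (A := 2 * INR (S k) * h).
    replace ((2 * INR k + 1) * h) with (A - h) by (unfold A; rewrite S_INR; ring).
    replace ((2 * INR (S k) + 1) * h) with (A + h) by (unfold A; rewrite S_INR; ring).
    rewrite cos_minus, cos_plus. ring.
Qed.

Lemma lambda_im_value k : (1 <= k)%nat ->
  lambda_im k (2 * k + 1) = 1 / (2 * INR (2 * k + 1)) * cot (PI / (2 * INR (2 * k + 1))).
Proof.
  intros Hk. set (n := (2 * k + 1)%nat).
  assert (Hn : 3 <= INR n) by (replace 3 with (INR 3) by (simpl; ring); apply le_INR; unfold n; lia).
  assert (HP := PI_RGT_0).
  set (g := PI / (2 * INR n)).
  assert (Hg0 : 0 < g) by (unfold g; apply Rdiv_lt_0_compat; lra).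
  assert (Hg1 : g <= PI / 6).
  { unfold g. apply Rmult_le_compat_l; [lra|]. apply Rinv_le_contravar; lra. }
  assert (Sg : 0 < sin g) by (apply sin_gt_0; lra).
  assert (Cg : 0 < cos g) by (apply cos_gt_0; lra).
  assert (S2 : sin (2 * g) = 2 * sin g * cos g) by apply sin_2a.
  assert (C2 : cos (2 * g) = cos g * cos g - sin g * sin g) by apply cos_2a.
  assert (Py := sin2_cos2 g). unfold Rsqr in Py.
  assert (Hs2 : 0 < sin (2 * g)) by (rewrite S2; nra).
  assert (Epi : (2 * INR k + 1) * (2 * g) = PI).
  { unfold g, n. rewrite plus_INR, mult_INR. simpl (INR 2). simpl (INR 1).
    assert (0 <= INR k) by apply pos_INR. field. lra. }
  assert (Sum := sin_sum k (2 * g)). rewrite Epi, cos_PI in Sum.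
  unfold lambda_im. fold n.
  replace (rsum k (fun j => sin (2 * PI * INR (S j) / INR n)))
    with ((cos (2 * g) + 1) / (2 * sin (2 * g))).
  2:{ replace (rsum k (fun j => sin (2 * PI * INR (S j) / INR n)))
        with (rsum k (fun t => sin (2 * INR (S t) * (2 * g))))
        by (apply rsum_ext; intros; f_equal; unfold g; field; lra).
      field_simplify_eq; lra. }
  unfold cot. fold g. rewrite S2, C2.
  replace (cos g * cos g - sin g * sin g + 1) with (2 * cos g * cos g) by lra.
  field. split; lra.
Qed.

Theorem theorem10 (n : nat) (Hn : (3 <= n)%nat) (Hodd : Nat.Odd n) :
  is_lub (Im_spectra n) (1 / (2 * INR n) * cot (PI / (2 * INR n))) /\
  lambda_im ((n - 1) / 2) n = 1 / (2 * INR n) * cot (PI / (2 * INR n)).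
Proof.
  destruct Hodd as [k ->].
  assert (Hk : (1 <= k)%nat) by lia.
  replace ((2 * k + 1 - 1) / 2)%nat with k
    by (replace (2 * k + 1 - 1)%nat with (k * 2)%nat by lia; symmetry; apply Nat.div_mul; lia).
  split; [split | apply lambda_im_value, Hk].
  - intros t [M [a [[_ Hoff] Heig]]].
    exact (im_eigenvalue_bound (2 * k + 1) ltac:(lia) M a t Hoff Heig).
  - intros b Hub. apply Hub. rewrite <- lambda_im_value by exact Hk.
    exists (circ k), (lambda_re k (2 * k + 1)).
    split; [apply circ_laplacian | apply circ_eigenvalue].
Qed.
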